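(* Let $d:\mathcal{A}\to A$ be any derivation with Fourier components $d_n$. Then for every $a\in\mathcal{A}$ and every finitely supported $x\in c_{00}(\mathbb{Z}_{\ge0})\subseteq\ell^2(\mathbb{Z}_{\ge0})$, the series $\sum_{n\in\mathbb{Z}}d_n(a)x$ converges in $\ell^2(\mathbb{Z}_{\ge0})$ and $\sum_{n\in\mathbb{Z}}d_n(a)x=d(a)x$.
   Context: Setup: $G$ is an infinite compact (Hausdorff) abelian group, written additively, and $x_1\in G$ generates a dense cyclic subgroup; $x_n=nx_1$. $\widehat G$ is the group of continuous characters. Let $H_+=\ell^2(\mathbb{Z}_{\ge 0})$ with canonical basis $\{E_k^+\}$; $UE_k^+=E_{k+1}^+$, $M^+_fE^+_k=f(x_k)E^+_k$, $\mathbb{K}E_k^+=kE_k^+$. $A=C^*(U,M^+_f:f\in C(G))$, $\mathcal{A}$ is the $*$-subalgebra generated by $U,U^*,M^+_\chi$ ($\chi\in\widehat G$). For $\theta\in\mathbb{R}$, $\rho_\theta(a)=e^{i\theta\mathbb{K}}ae^{-i\theta\mathbb{K}}$. The $n$-th Fourier component of a derivation $d:\mathcal A\to A$ is $d_n(a)=\frac{1}{2\pi}\int_0^{2\pi}e^{in\theta}\rho_\theta^{-1}\big(d(\rho_\theta(a))\big)\,d\theta$. *)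

From HB Require Import structures.
From mathcomp Require Import all_boot all_order all_algebra.
From mathcomp Require Import all_classical all_reals all_analysis.
From mathcomp Require Import complex.

Set Implicit Arguments.
Unset Strict Implicit.
Unset Printing Implicit Defensive.

Import Order.TTheory GRing.Theory Num.Theory.
Import numFieldNormedType.Exports.

Local Open Scope classical_set_scope.
Local Open Scope ring_scope.

(* Sequences nat -> R[i] model vectors of l^2(Z_{>=0}); operators are     *)
(* maps of sequences; only their action on l^2 is ever constrained.       *)

Section Defs.
Variable R : realType.

Local Notation C := (R[i]).

Definition cexpi (t : R) : C := Complex (cos t) (sin t).

Definition sqsum (x : nat -> C) : R ^nat :=
  series (fun k => Normc.normc (x k) ^+ 2).
Definition ell2 (x : nat -> C) : Prop := cvgn (sqsum x).
Definition l2norm (x : nat -> C) : R := Num.sqrt (limn (sqsum x)).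
Definition finsupp (x : nat -> C) : Prop :=
  exists N : nat, forall k, (N <= k)%N -> x k = 0.

Definition op := (nat -> C) -> (nat -> C).

Definition op_add (T S : op) : op := fun x k => T x k + S x k.
Definition op_scale (c : C) (T : op) : op := fun x k => c * T x k.
Definition op_mul (T S : op) : op := fun x => T (S x).

Definition opeq (T S : op) : Prop := forall x, ell2 x -> T x = S x.

Definition Ushift : op := fun x k => if k is k'.+1 then x k' else 0.
Definition Ushift_adj : op := fun x k => x k.+1.

(* M_f E_k = f(x_k) E_k with x_k = k x_1 *)
Definition Mult (G : zmodType) (x1 : G) (f : G -> C) : op :=
  fun x k => f (x1 *+ k) * x k.

(* rho_theta(a) = e^{i theta K} a e^{-i theta K}, K E_k = k E_k *)
Definition rho (t : R) (a : op) : op :=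
  fun x k => cexpi (t * k%:R) * a (fun j => cexpi (- (t * j%:R)) * x j) k.

(* continuous functions G -> C (C = R^2 with the product topology) *)
Definition continuousC (G : topologicalType) (f : G -> C) : Prop :=
  continuous (fun g => complex.Re (f g)) /\ continuous (fun g => complex.Im (f g)).

Definition is_character (G : topologicalZmodType) (chi : G -> C) : Prop :=
  continuousC chi /\ (forall g h, chi (g + h) = chi g * chi h) /\
  (forall g, Normc.normc (chi g) = 1).

Inductive alg_gen (gens : op -> Prop) : op -> Prop :=
| alg_gen_gen T : gens T -> alg_gen gens T
| alg_gen_add T S : alg_gen gens T -> alg_gen gens S -> alg_gen gens (op_add T S)
| alg_gen_scale c T : alg_gen gens T -> alg_gen gens (op_scale c T)
| alg_gen_mul T S : alg_gen gens T -> alg_gen gens S -> alg_gen gens (op_mul T S).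

(* \mathcal A = *-algebra generated by U, U^*, M_chi (chi in \hat G);
   the generating set is closed under adjoints (M_chi^* = M_{conj chi}). *)
Definition calA (G : topologicalZmodType) (x1 : G) : op -> Prop :=
  alg_gen (fun T => T = Ushift \/ T = Ushift_adj \/
                    exists chi, is_character chi /\ T = Mult x1 chi).

Definition algA0 (G : topologicalZmodType) (x1 : G) : op -> Prop :=
  alg_gen (fun T => T = Ushift \/ T = Ushift_adj \/
                    exists f, continuousC f /\ T = Mult x1 f).

(* A = C^*(U, M_f) = operator-norm closure of algA0 in B(l^2) *)
Definition inA (G : topologicalZmodType) (x1 : G) (T : op) : Prop :=
  (forall x, ell2 x -> ell2 (T x)) /\
  (exists M : R, forall x, ell2 x -> l2norm (T x) <= M * l2norm x) /\
  (forall eps : R, 0 < eps -> exists S, algA0 x1 S /\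
     forall x, ell2 x -> l2norm (fun k => T x k - S x k) <= eps * l2norm x).

Definition is_derivation (G : topologicalZmodType) (x1 : G) (d : op -> op) : Prop :=
  (forall a, calA x1 a -> inA x1 (d a)) /\
  (forall a b, calA x1 a -> calA x1 b -> opeq (d (op_add a b)) (op_add (d a) (d b))) /\
  (forall c a, calA x1 a -> opeq (d (op_scale c a)) (op_scale c (d a))) /\
  (forall a b, calA x1 a -> calA x1 b ->
     opeq (d (op_mul a b)) (op_add (op_mul (d a) b) (op_mul a (d b)))).

Definition cint02pi (f : R -> C) : C :=
  Complex (Rintegral (@lebesgue_measure R) `[0, 2 * pi] (fun t => complex.Re (f t)))
          (Rintegral (@lebesgue_measure R) `[0, 2 * pi] (fun t => complex.Im (f t))).

(* n-th Fourier component d_n(a) = (1/2pi) int_0^{2pi} e^{in theta}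
   rho_theta^{-1}(d(rho_theta(a))) d theta, applied to a vector x,
   the integral being taken coordinatewise. *)
Definition fourier_comp (d : op -> op) (n : int) (a : op) : op :=
  fun x i => ((2 * pi)^-1)%:C%C *
     cint02pi (fun t => cexpi (n%:~R * t) * rho (- t) (d (rho t a)) x i).

End Defs.

From HB Require Import structures.
From mathcomp Require Import all_boot all_order all_algebra.
From mathcomp Require Import all_classical all_reals all_analysis.
From mathcomp Require Import complex.
From mathcomp Require Import ring lra zify.
(* Every element a of the algebra generated by U, U^* and the M_chi is a finite sum of
   rho-homogeneous elements b_q, i.e. rho_t(b_q) = e^{i k_q t} b_q, and a finitely supported
   x is the finite sum of its coordinates x_j E_j.  By the Leibniz rule d is additive on such
   sums, so the i-th coordinate of rho_t^{-1}(d(rho_t(a))) x is the trigonometric polynomial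
     sum_{q,j} e^{i (k_q + j - i) t} d(b_q)(x_j E_j)_i.
   Hence d_n(a) x collects the finitely many l^2 vectors d(b_q)(x_j E_j) on the coordinates
   i = n + k_q + j.  A symmetric partial sum of sum_n d_n(a) x therefore agrees with
   d(a) x = sum_{q,j} d(b_q)(x_j E_j) except at coordinates beyond a window growing with the
   partial sum, where the l^2 tails of these finitely many vectors are uniformly small. *)

Set Implicit Arguments.
Unset Strict Implicit.
Unset Printing Implicit Defensive.

Import Order.TTheory GRing.Theory Num.Theory.
Import numFieldNormedType.Exports.
Local Open Scope classical_set_scope.
Local Open Scope ring_scope.

Lemma sum_ord_if_eqz (V : nmodType) (L : nat) (m : int) (z : V) :
  \sum_(j < L) (if j%:Z == m then z else 0) = if (0 <= m) && (m < L%:Z) then z else 0.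
Proof.
case: m => [n|n]; last by rewrite big1.
under eq_bigr do rewrite eqz_nat.
by rewrite -big_mkcond (big_ord1_eq _ (fun=> z)).
Qed.

Section SquareSummable.
Variable R : realType.
Local Notation C := R[i].

Definition sqnormc (z : C) : R := complex.Re z ^+ 2 + complex.Im z ^+ 2.

Lemma sqnormc_ge0 z : 0 <= sqnormc z.
Proof. by rewrite addr_ge0 // sqr_ge0. Qed.

Lemma sqnormc0 : sqnormc 0 = 0.
Proof. by rewrite /sqnormc expr0n addr0. Qed.

Lemma sqnormcN z : sqnormc (- z) = sqnormc z.
Proof. by case: z => a b; rewrite /sqnormc /= !sqrrN. Qed.

Lemma sqsumE (y : nat -> C) n : sqsum y n = \sum_(0 <= k < n) sqnormc (y k).
Proof.
rewrite /sqsum /series /=; apply: eq_bigr => k _.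
by case: (y k) => a b; rewrite /Normc.normc /sqnormc sqr_sqrtr // addr_ge0 // sqr_ge0.
Qed.

Lemma nondecreasing_sqsum (y : nat -> C) : nondecreasing_seq (sqsum y).
Proof. by apply: nondecreasing_series => k _ _; exact: sqr_ge0. Qed.

Lemma sqsum_le_limn (y : nat -> C) n : ell2 y -> sqsum y n <= limn (sqsum y).
Proof. by move=> y2; apply: nondecreasing_cvgn_le => //; exact: nondecreasing_sqsum. Qed.

Lemma ell2_bounded (y : nat -> C) (B : R) :
  (forall n, sqsum y n <= B) -> ell2 y /\ limn (sqsum y) <= B.
Proof.
move=> yB; have y2 : ell2 y.
  by apply: nondecreasing_is_cvgn; [exact: nondecreasing_sqsum | exists B => _ [n _ <-]].
by split=> //; apply: limr_le => //; exact: nearW.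
Qed.

Lemma ell2N (y : nat -> C) : ell2 y -> ell2 (fun k => - y k).
Proof.
rewrite /ell2; suff -> : sqsum (fun k => - y k) = sqsum y by [].
by apply/funext => n; rewrite !sqsumE; apply: eq_bigr => k _; rewrite sqnormcN.
Qed.

Lemma ell2_finsupp (y : nat -> C) N : (forall k, (N <= k)%N -> y k = 0) -> ell2 y.
Proof.
move=> yN; suff yB n : sqsum y n <= sqsum y N by exact: (ell2_bounded yB).1.
case: (leqP n N) => [nN|Nn]; first exact: nondecreasing_sqsum.
rewrite !sqsumE (big_cat_nat (n := N)) ?(ltnW Nn) //= [X in _ + X]big1_seq ?addr0 //.
by move=> k /andP[_]; rewrite mem_index_iota => /andP[Nk _]; rewrite yN // sqnormc0.
Qed.

(* Summing the AM-GM inequalities [2 S f_q <= S^2 / n + n f_q^2]. *)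
Lemma sqr_sum_le_card (I : finType) (f : I -> R) :
  (\sum_q f q) ^+ 2 <= #|I|%:R * \sum_q f q ^+ 2.
Proof.
have [/card0_eq I0|n_gt0] := posnP #|I|.
  by rewrite !big_pred0 // expr0n mulr0.
set S := \sum_q f q; set n : R := #|I|%:R.
have n0 : 0 < n by rewrite ltr0n.
have amgm q : 2 * (S * f q) <= S ^+ 2 / n + n * f q ^+ 2.
  have e : S ^+ 2 / n + n * f q ^+ 2 - 2 * (S * f q) = (S - n * f q) ^+ 2 / n.
    by field; rewrite gt_eqF.
  by rewrite -subr_ge0 e divr_ge0 ?sqr_ge0 ?ltW.
have : \sum_q 2 * (S * f q) <= \sum_q (S ^+ 2 / n + n * f q ^+ 2).
  by apply: ler_sum => q _; exact: amgm.
rewrite big_split /= sumr_const -!mulr_sumr -/S -[X in _ / n *+ X]/#|I|.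
rewrite -[_ / n *+ _]mulr_natr -/n divfK ?gt_eqF //.
rewrite -expr2; lra.
Qed.

Lemma Re_sum (I : Type) (s : seq I) (P : pred I) (z : I -> C) :
  complex.Re (\sum_(q <- s | P q) z q) = \sum_(q <- s | P q) complex.Re (z q).
Proof. by apply: (big_morph _ _ (erefl : complex.Re 0 = 0)) => -[? ?] [? ?]. Qed.

Lemma Im_sum (I : Type) (s : seq I) (P : pred I) (z : I -> C) :
  complex.Im (\sum_(q <- s | P q) z q) = \sum_(q <- s | P q) complex.Im (z q).
Proof. by apply: (big_morph _ _ (erefl : complex.Im 0 = 0)) => -[? ?] [? ?]. Qed.

Lemma sqnormc_sum_le_card (I : finType) (z : I -> C) :
  sqnormc (\sum_q z q) <= #|I|%:R * \sum_q sqnormc (z q).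
Proof.
by rewrite /sqnormc Re_sum Im_sum big_split mulrDr lerD // sqr_sum_le_card.
Qed.

Lemma sum_sqnormc_mask_le_tail (y : nat -> C) (m : nat -> bool) K n :
  ell2 y -> (forall k, m k -> (K <= k)%N) ->
  \sum_(0 <= k < n) sqnormc (if m k then y k else 0) <= limn (sqsum y) - sqsum y K.
Proof.
move=> y2 mK; set F := fun k => sqnormc (if m k then y k else 0).
have F_ge0 k : 0 <= F k by exact: sqnormc_ge0.
apply: le_trans (_ : \sum_(0 <= k < n + K) F k <= _).
  by rewrite [X in _ <= X](big_cat_nat (n := n)) ?leq_addr //= lerDl sumr_ge0.
apply: le_trans (_ : sqsum y (n + K) - sqsum y K <= _); last first.
  by rewrite lerB // sqsum_le_limn.
rewrite !sqsumE !(big_cat_nat (leq0n K) (leq_addl n K)) /= addrAC subrr add0r.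
rewrite big1_seq ?add0r => [|k]; last first.
  by rewrite mem_index_iota /F; case: ifP => [/mK|_ _]; rewrite ?sqnormc0 // leqNgt => /negbTE ->.
by apply: ler_sum => k _; rewrite /F; case: ifP => // _; rewrite sqnormc0 sqnormc_ge0.
Qed.

Definition masked_sum (I : finType) (v : I -> nat -> C) (m : I -> nat -> bool) : nat -> C :=
  fun k => \sum_q (if m q k then v q k else 0).

Lemma masked_sumB (I : finType) (v : I -> nat -> C) (m : I -> nat -> bool) i :
  masked_sum v m i - \sum_q v q i = masked_sum (fun q j => - v q j) (fun q j => ~~ m q j) i.
Proof.
by rewrite /masked_sum -sumrB; apply: eq_bigr => q _; case: (m q i); rewrite ?subrr ?sub0r.
Qed.

Section MaskedSum.
Variables (I : finType) (v : I -> nat -> C).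
Hypothesis v2 : forall q, ell2 (v q).

Lemma sqsum_masked_sum_le (m : I -> nat -> bool) K n :
  (forall q k, m q k -> (K <= k)%N) ->
  sqsum (masked_sum v m) n <= #|I|%:R * \sum_q (limn (sqsum (v q)) - sqsum (v q) K).
Proof.
move=> mK; rewrite sqsumE.
apply: le_trans (_ : \sum_(0 <= k < n) #|I|%:R *
    \sum_q sqnormc (if m q k then v q k else 0) <= _).
  by apply: ler_sum => k _; exact: sqnormc_sum_le_card.
rewrite -mulr_sumr exchange_big ler_wpM2l //=; apply: ler_sum => q _.
exact: sum_sqnormc_mask_le_tail n (@v2 q) (mK q).
Qed.

Lemma ell2_masked_sum (m : I -> nat -> bool) : ell2 (masked_sum v m).
Proof.
by case: (ell2_bounded (fun n => @sqsum_masked_sum_le m 0 n (fun _ _ _ => leq0n _))).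
Qed.

Lemma l2norm_masked_sum_lt (e : R) : 0 < e -> exists K, forall m : I -> nat -> bool,
  (forall q k, m q k -> (K <= k)%N) -> l2norm (masked_sum v m) < e.
Proof.
move=> e_gt0.
pose tail K := #|I|%:R * \sum_q (limn (sqsum (v q)) - sqsum (v q) K).
have tail0 : tail n @[n --> \oo] --> 0.
  have -> : 0 = #|I|%:R * \sum_(q : I) (limn (sqsum (v q)) - limn (sqsum (v q))) :> R.
    by rewrite big1 ?mulr0 // => q _; rewrite subrr.
  apply: cvgM; first exact: cvg_cst.
  apply: cvg_big => [|q _]; first exact: add_continuous.
  exact: cvgB (cvg_cst _) (@v2 q).
have /cvgrPdist_lt /(_ (e ^+ 2) (exprn_gt0 _ e_gt0)) [K _ tailK] := tail0.
exists K => m mK; have [_ limK] := ell2_bounded (@sqsum_masked_sum_le m K^~ mK).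
rewrite /l2norm -(ger0_norm (ltW e_gt0)) -sqrtr_sqr ltr_sqrt ?exprn_gt0 //.
apply: le_lt_trans limK _; apply: le_lt_trans (tailK K (leqnn K)).
by rewrite sub0r normrN ler_norm.
Qed.

End MaskedSum.

End SquareSummable.

Section Trigonometry.
Variable R : realType.
Local Notation C := R[i].
Local Notation mu := (@lebesgue_measure R).

Lemma continuous_sum (T : topologicalType) (I : Type) (s : seq I) (f : I -> T -> R) :
  (forall q, continuous (f q)) -> continuous (fun t => \sum_(q <- s) f q t).
Proof. by move=> fc t; apply: cvg_big => [|q _]; [exact: add_continuous | exact: fc]. Qed.

Lemma continuous_Rintegrable (f : R -> R) (a b : R) :
  continuous f -> mu.-integrable `[a, b] (EFin \o f).
Proof.
move=> fc; apply: continuous_compact_integrable; first exact: segment_compact.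
exact: continuous_subspaceT.
Qed.

Lemma Rintegral_sum (I : Type) (s : seq I) (f : I -> R -> R) (a b : R) :
  (forall q, continuous (f q)) ->
  Rintegral mu `[a, b] (fun t => \sum_(q <- s) f q t) =
  \sum_(q <- s) Rintegral mu `[a, b] (f q).
Proof.
move=> fc; elim: s => [|p s IH].
  have -> : (fun t => \sum_(q <- [::]) f q t) = cst 0 by apply/funext => t; rewrite big_nil.
  by rewrite Rintegral_cst // mul0r big_nil.
have -> : (fun t => \sum_(q <- p :: s) f q t) = f p \+ (fun t => \sum_(q <- s) f q t).
  by apply/funext => t; rewrite big_cons.
rewrite RintegralD ?IH ?big_cons //; apply: continuous_Rintegrable => //.
exact: continuous_sum.
Qed.

Lemma Rintegral_is_derive (f F : R -> R) (a b : R) : a < b -> continuous f ->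
  (forall x : R, is_derive x (1 : R) F (f x)) -> Rintegral mu `[a, b] f = F b - F a.
Proof.
move=> ab fc dF; have Fd x : derivable F x 1 by exact: ex_derive.
have Fc : continuous F by move=> x; exact/differentiable_continuous/derivable1_diffP.
rewrite /Rintegral (@continuous_FTC2 _ f F a b ab) //.
- exact/continuous_subspaceT.
- split; first by move=> x _; exact: Fd.
  + exact: cvg_at_right_filter (Fc a).
  + exact: cvg_at_left_filter (Fc b).
- by move=> x _; rewrite derive1E derive_val.
Qed.

Lemma sin_mulz_2pi (k : int) : sin (k%:~R * (2 * pi)) = 0 :> R.
Proof.
have sin_muln_2pi (n : nat) : sin (n%:R * (2 * pi)) = 0 :> R.
  rewrite -[RHS](sin0 R) -(periodicn (@sinD2pi R) n 0) add0r.
  by congr sin; rewrite -mulrnA -[RHS]mulr_natr natrM [RHS]mulrC -[RHS]mulrA [LHS]mulrCA.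
case: k => n; first exact: sin_muln_2pi.
by rewrite NegzE intrN mulNr sinN -pmulrn sin_muln_2pi oppr0.
Qed.

Lemma cos_mulz_2pi (k : int) : cos (k%:~R * (2 * pi)) = 1 :> R.
Proof.
have cos_muln_2pi (n : nat) : cos (n%:R * (2 * pi)) = 1 :> R.
  rewrite -[RHS](cos0 R) -(periodicn (@cosD2pi R) n 0) add0r.
  by congr cos; rewrite -mulrnA -[RHS]mulr_natr natrM [RHS]mulrC -[RHS]mulrA [LHS]mulrCA.
case: k => n; first exact: cos_muln_2pi.
by rewrite NegzE intrN mulNr cosN -pmulrn cos_muln_2pi.
Qed.

Lemma continuous_cos_mul (r : R) : continuous (fun t => cos (r * t)).
Proof. by move=> t; apply: continuous_comp; [exact: mulrl_continuous | exact: continuous_cos]. Qed.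

Lemma continuous_sin_mul (r : R) : continuous (fun t => sin (r * t)).
Proof. by move=> t; apply: continuous_comp; [exact: mulrl_continuous | exact: continuous_sin]. Qed.

Lemma pi2_gt0 : 0 < 2 * pi :> R.
Proof. by rewrite mulr_gt0 ?pi_gt0. Qed.

Lemma Rintegral_cos_mulz (k : int) :
  Rintegral mu `[0, 2 * pi] (fun t => cos (k%:~R * t)) = (k == 0)%:R * (2 * pi).
Proof.
have [->|k0] := eqVneq k 0.
  have -> : (fun t => cos (0%:~R * t)) = cst (1 : R) by apply/funext => t; rewrite mul0r cos0.
  by rewrite (@Rintegral_is_derive _ id _ _ pi2_gt0) ?subr0 ?mul1r //; exact: cst_continuous.
have kR0 : k%:~R != 0 :> R by rewrite intr_eq0.
pose F := k%:~R^-1 \*: (sin \o (k%:~R \*: @id R)).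
have dF t : is_derive t (1 : R) F (cos (k%:~R * t)).
  apply: is_derive_eq; rewrite /= /GRing.scale /= mulr1 mulrCA mulVf ?mulr1 //.
rewrite (Rintegral_is_derive pi2_gt0 (@continuous_cos_mul _) dF).
by rewrite /F /= /GRing.scale /= mulr0 sin0 sin_mulz_2pi mulr0 subrr mul0r.
Qed.

Lemma Rintegral_sin_mulz (k : int) :
  Rintegral mu `[0, 2 * pi] (fun t => sin (k%:~R * t)) = 0.
Proof.
have [->|k0] := eqVneq k 0.
  have -> : (fun t => sin (0%:~R * t)) = cst (0 : R) by apply/funext => t; rewrite mul0r sin0.
  by rewrite Rintegral_cst // mul0r.
have kR0 : k%:~R != 0 :> R by rewrite intr_eq0.
pose F := (- k%:~R^-1) \*: (cos \o (k%:~R \*: @id R)).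
have dF t : is_derive t (1 : R) F (sin (k%:~R * t)).
  apply: is_derive_eq; rewrite /= /GRing.scale /= mulr1 mulNr mulNr mulrN opprK mulrCA.
  by rewrite mulVf ?mulr1.
rewrite (Rintegral_is_derive pi2_gt0 (@continuous_sin_mul _) dF).
by rewrite /F /= /GRing.scale /= mulr0 cos0 cos_mulz_2pi subrr.
Qed.

Lemma Rintegral_trig (a b : R) (k : int) :
  Rintegral mu `[0, 2 * pi] (fun t => a * cos (k%:~R * t) + b * sin (k%:~R * t)) =
  a * ((k == 0)%:R * (2 * pi)).
Proof.
have cc := @continuous_cos_mul k%:~R; have sc := @continuous_sin_mul k%:~R.
rewrite RintegralD //; first last.
- by apply: continuous_Rintegrable => t; apply: continuousM (sc t); exact: cvg_cst.
- by apply: continuous_Rintegrable => t; apply: continuousM (cc t); exact: cvg_cst.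
rewrite RintegralZl ?continuous_Rintegrable // RintegralZl ?continuous_Rintegrable //.
by rewrite Rintegral_cos_mulz Rintegral_sin_mulz mulr0 addr0.
Qed.

Lemma continuous_trig (a b : R) (k : int) :
  continuous (fun t : R => a * cos (k%:~R * t) + b * sin (k%:~R * t)).
Proof.
move=> t; apply: cvgD; apply: cvgM;
  by [exact: cvg_cst | exact: continuous_cos_mul | exact: continuous_sin_mul].
Qed.

Lemma cexpi0 : cexpi 0 = 1 :> C.
Proof. by rewrite /cexpi sin0 cos0. Qed.

Lemma cexpiD (t u : R) : cexpi (t + u) = cexpi t * cexpi u.
Proof. by rewrite /cexpi; simpc; rewrite sinD cosD; congr Complex; ring. Qed.

Lemma cexpiNK (t : R) : cexpi (- t) * cexpi t = 1.
Proof. by rewrite -cexpiD addNr cexpi0. Qed.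

Lemma Re_mul_cexpi (c : C) (t : R) :
  complex.Re (c * cexpi t) = complex.Re c * cos t + (- complex.Im c) * sin t.
Proof. by case: c => a b; rewrite /cexpi; simpc. Qed.

Lemma Im_mul_cexpi (c : C) (t : R) :
  complex.Im (c * cexpi t) = complex.Im c * cos t + complex.Re c * sin t.
Proof. by case: c => a b; rewrite /cexpi; simpc; rewrite /= addrC. Qed.

Lemma cint02pi_sum_cexpi (I : Type) (s : seq I) (c : I -> C) (k : I -> int) :
  cint02pi (fun t => \sum_(q <- s) c q * cexpi ((k q)%:~R * t)) =
  \sum_(q <- s | k q == 0) c q * (2 * pi)%:C%C.
Proof.
have ReE : (fun t => complex.Re (\sum_(q <- s) c q * cexpi ((k q)%:~R * t))) =
    fun t => \sum_(q <- s) (complex.Re (c q) * cos ((k q)%:~R * t) +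
                            (- complex.Im (c q)) * sin ((k q)%:~R * t)).
  by apply/funext => t; rewrite Re_sum; apply: eq_bigr => q _; rewrite Re_mul_cexpi.
have ImE : (fun t => complex.Im (\sum_(q <- s) c q * cexpi ((k q)%:~R * t))) =
    fun t => \sum_(q <- s) (complex.Im (c q) * cos ((k q)%:~R * t) +
                            complex.Re (c q) * sin ((k q)%:~R * t)).
  by apply/funext => t; rewrite Im_sum; apply: eq_bigr => q _; rewrite Im_mul_cexpi.
rewrite /cint02pi ReE ImE !Rintegral_sum => [|q|q]; try exact: continuous_trig.
apply/eqP; rewrite eq_complex /= Re_sum Im_sum.
apply/andP; split; apply/eqP; rewrite [RHS]big_mkcond; apply: eq_bigr => q _;
  by rewrite Rintegral_trig; case: eqP => _; case: (c q) => ? ?; rewrite /= ?mul1r ?mul0r ?mulr0 ?subr0 ?add0r.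
Qed.

Lemma mean_sum_cexpi (I : Type) (s : seq I) (c : I -> C) (k : I -> int) :
  ((2 * pi)^-1)%:C%C * cint02pi (fun t => \sum_(q <- s) c q * cexpi ((k q)%:~R * t)) =
  \sum_(q <- s | k q == 0) c q.
Proof.
have inv2pi : ((2 * pi)^-1)%:C%C * (2 * pi)%:C%C = 1 :> C.
  by rewrite -!complexr0; simpc; rewrite mulVf // gt_eqF // pi2_gt0.
by rewrite cint02pi_sum_cexpi mulr_sumr; apply: eq_bigr => q _; rewrite mulrCA inv2pi mulr1.
Qed.

End Trigonometry.

Section Operators.
Variable R : realType.
Local Notation C := R[i].
Local Notation op := (op R).

Definition op_linear (T : op) : Prop :=
  (forall y z, T (fun k => y k + z k) = fun k => T y k + T z k) /\
  (forall c y, T (fun k => c * y k) = fun k => c * T y k).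

Lemma op_linear_sum (T : op) (I : Type) (s : seq I) (F : I -> nat -> C) : op_linear T ->
  T (fun k => \sum_(p <- s) F p k) = fun k => \sum_(p <- s) T (F p) k.
Proof.
move=> [TD TZ]; elim: s => [|p s IH].
  under eq_fun do rewrite big_nil.
  have := TZ 0 (fun _ => 0); under eq_fun do rewrite mul0r.
  by move=> ->; apply/funext => k; rewrite mul0r big_nil.
under eq_fun do rewrite big_cons.
by rewrite TD IH; apply/funext => k; rewrite big_cons.
Qed.

Lemma op_linear_sumZ (T : op) (I : Type) (s : seq I) (c : I -> C) (F : I -> nat -> C) :
  op_linear T ->
  T (fun k => \sum_(p <- s) c p * F p k) = fun k => \sum_(p <- s) c p * T (F p) k.
Proof.
move=> Tlin; rewrite op_linear_sum //; apply/funext => k.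
by apply: eq_bigr => p _; rewrite Tlin.2.
Qed.

Definition opsum (I : Type) (s : seq I) (F : I -> op) : op :=
  fun x k => \sum_(p <- s) F p x k.

(* The zero operator, written as an element of the generated algebra. *)
Lemma opsum_nil (I : Type) (F : I -> op) : opsum [::] F = op_scale 0 (@Ushift R).
Proof. by apply/funext => x; apply/funext => k; rewrite /opsum /op_scale big_nil mul0r. Qed.

Lemma opsum_cons (I : Type) p (s : seq I) (F : I -> op) :
  opsum (p :: s) F = op_add (F p) (opsum s F).
Proof. by apply/funext => x; apply/funext => k; rewrite /opsum /op_add big_cons. Qed.

Definition homogeneous (n : int) (b : op) : Prop :=
  forall t, rho t b = op_scale (cexpi (n%:~R * t)) b.

Lemma rho0 (T : op) : rho 0 T = T.
Proof.
apply/funext => x; apply/funext => k; rewrite /rho mul0r cexpi0 mul1r.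
by congr T; apply/funext => j; rewrite mul0r oppr0 cexpi0 mul1r.
Qed.

Lemma rho_opsum t (I : Type) (s : seq I) (F : I -> op) :
  rho t (opsum s F) = opsum s (fun p => rho t (F p)).
Proof. by apply/funext => x; apply/funext => k; rewrite /rho /opsum mulr_sumr. Qed.

Lemma rho_scale t c (T : op) : rho t (op_scale c T) = op_scale c (rho t T).
Proof. by apply/funext => x; apply/funext => k; rewrite /rho /op_scale mulrCA. Qed.

Lemma rho_mul t (T S : op) : rho t (op_mul T S) = op_mul (rho t T) (rho t S).
Proof.
apply/funext => x; apply/funext => k; rewrite /rho /op_mul; congr (_ * T _ k).
by apply/funext => j; rewrite mulrA cexpiNK mul1r.
Qed.

Lemma homogeneous_Ushift : homogeneous 1 (@Ushift R).
Proof.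
move=> t; apply/funext => x; apply/funext => -[|k]; rewrite /rho /op_scale /=; first by rewrite !mulr0.
by rewrite mulrA -cexpiD -natr1 mulr1z; congr (cexpi _ * _); ring.
Qed.

Lemma homogeneous_Ushift_adj : homogeneous (-1) (@Ushift_adj R).
Proof.
move=> t; apply/funext => x; apply/funext => k; rewrite /rho /op_scale /=.
by rewrite mulrA -cexpiD -natr1 mulrN1z; congr (cexpi _ * _); ring.
Qed.

Lemma homogeneous_Mult (G : zmodType) (x1 : G) (f : G -> C) : homogeneous 0 (Mult x1 f).
Proof.
move=> t; apply/funext => x; apply/funext => k; rewrite /rho /op_scale /Mult.
by rewrite (mulrCA (cexpi _)) [cexpi _ * (cexpi _ * _)]mulrA -cexpiD subrr mul0r cexpi0 !mul1r.
Qed.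

Lemma homogeneous_scale n c (b : op) : homogeneous n b -> homogeneous n (op_scale c b).
Proof.
move=> bh t; rewrite rho_scale bh; apply/funext => x; apply/funext => k.
by rewrite /op_scale mulrCA.
Qed.

Lemma homogeneous_mul m n (b b' : op) :
  homogeneous m b -> homogeneous n b' -> op_linear b -> homogeneous (m + n) (op_mul b b').
Proof.
move=> bh b'h blin t; rewrite rho_mul bh b'h; apply/funext => x; apply/funext => k.
by rewrite /op_mul /op_scale blin.2 mulrA -cexpiD intrD mulrDl.
Qed.

Section GeneratedAlgebra.
Variables (G : topologicalZmodType) (x1 : G).
Local Notation calA := (calA x1).

Lemma calA_linear a : calA a -> op_linear a.
Proof.
elim=> {a} [T [->|[->|[chi [_ ->]]]]|T S _ [TD TZ] _ [SD SZ]|c T _ [TD TZ]|T S _ [TD TZ] _ [SD SZ]].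
- by split=> [y z|c y]; apply/funext => -[|k] //=; rewrite ?addr0 ?mulr0.
- by split.
- by split=> [y z|c y]; apply/funext => k; rewrite /Mult; [exact: mulrDr | exact: mulrCA].
- split=> [y z|c y]; apply/funext => k; rewrite /op_add ?TD ?SD ?TZ ?SZ; [ring | ring].
- split=> [y z|c' y]; apply/funext => k; rewrite /op_scale ?TD ?TZ; ring.
- by split=> [y z|c y]; apply/funext => k; rewrite /op_mul ?SD ?TD ?SZ ?TZ.
Qed.

Lemma calA_opsum (I : Type) (s : seq I) (F : I -> op) :
  (forall p, calA (F p)) -> calA (opsum s F).
Proof.
move=> FA; elim: s => [|p s IH]; last by rewrite opsum_cons; exact: alg_gen_add (FA p) IH.
by rewrite opsum_nil; apply: alg_gen_scale; apply: alg_gen_gen; left.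
Qed.

Lemma calA_homogeneous_decomposition a : calA a ->
  exists (I : finType) (k : I -> int) (b : I -> op),
    [/\ forall q, calA (b q), forall q, homogeneous (k q) (b q) & a = opsum (index_enum I) b].
Proof.
have single n T : calA T -> homogeneous n T -> exists (I : finType) (k : I -> int) (b : I -> op),
    [/\ forall q, calA (b q), forall q, homogeneous (k q) (b q) & T = opsum (index_enum I) b].
  move=> TA Th; exists 'I_1, (fun=> n), (fun=> T); split=> //.
  by apply/funext => x; apply/funext => i; rewrite /opsum big_ord1.
elim=> {a} [T TA|T S _ [I [k [b [bA bh ->]]]] _ [J [l [c [cA ch ->]]]]|
            c T _ [I [k [b [bA bh ->]]]]|T S _ [I [k [b [bA bh ->]]]] _ [J [l [c [cA ch ->]]]]].
- have : calA T by exact: alg_gen_gen.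
  case: TA => [->|[->|[chi [_ ->]]]] TA; apply: single TA _.
  + exact: homogeneous_Ushift.
  + exact: homogeneous_Ushift_adj.
  + exact: homogeneous_Mult.
- exists (I + J)%type, (fun q => match q with inl p => k p | inr p => l p end),
    (fun q => match q with inl p => b p | inr p => c p end).
  split=> [[p|p]|[p|p]|] //.
  by apply/funext => x; apply/funext => i; rewrite /opsum /op_add big_sumType.
- exists I, k, (fun q => op_scale c (b q)); split=> [q|q|].
  + exact: alg_gen_scale (bA q).
  + exact: homogeneous_scale (bh q).
  + by apply/funext => x; apply/funext => i; rewrite /opsum /op_scale mulr_sumr.
- exists (I * J)%type, (fun q => k q.1 + l q.2), (fun q => op_mul (b q.1) (c q.2)).
  split=> [q|q|]; first exact: alg_gen_mul (bA q.1) (cA q.2).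
    exact: homogeneous_mul (bh q.1) (ch q.2) (calA_linear (bA q.1)).
  apply/funext => x; apply/funext => i; rewrite /opsum /op_mul -(pair_bigA _ (fun p q => b p (c q x) i)).
  by apply: eq_bigr => p _; rewrite op_linear_sum //; exact: calA_linear.
Qed.

Fixpoint tail_proj (n : nat) : op :=
  if n is n'.+1 then op_mul (@Ushift R) (op_mul (tail_proj n') (@Ushift_adj R))
  else op_mul (@Ushift_adj R) (@Ushift R).

Lemma tail_projE n y k : tail_proj n y k = if (n <= k)%N then y k else 0.
Proof. by elim: n y k => [|n IH] y [|k] //=; rewrite /op_mul /Ushift_adj /Ushift // IH. Qed.

Lemma calA_tail_proj n : calA (tail_proj n).
Proof.
have UA : calA (@Ushift R) by apply: alg_gen_gen; left.
have UadjA : calA (@Ushift_adj R) by apply: alg_gen_gen; right; left.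
by elim: n => [|n IH] /=; [exact: alg_gen_mul | do 2!apply: alg_gen_mul => //].
Qed.

Definition coord_proj (j : nat) : op := fun y k => if k == j then y k else 0.

Lemma calA_coord_proj j : calA (coord_proj j).
Proof.
have -> : coord_proj j = op_add (tail_proj j) (op_scale (-1) (tail_proj j.+1)).
  apply/funext => y; apply/funext => k; rewrite /op_add /op_scale !tail_projE /coord_proj.
  by case: ltngtP; rewrite ?mulr0 ?addr0 // mulN1r subrr.
by apply: alg_gen_add; [|apply: alg_gen_scale]; exact: calA_tail_proj.
Qed.

Lemma finsupp_coord_expansion (x : nat -> C) N (c : nat -> C) :
  (forall k, (N <= k)%N -> x k = 0) ->
  (fun k => c k * x k) = fun k => \sum_(j < N) c j * coord_proj j x k.
Proof.
move=> xN; apply/funext => k; rewrite /coord_proj.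
under eq_bigr do rewrite (fun_if (GRing.mul (c _))) mulr0 eq_sym.
rewrite -big_mkcond (big_ord1_eq _ (fun j => c j * x k)).
by case: ltnP => // /xN ->; rewrite mulr0.
Qed.

Section Derivation.
Variable d : op -> op.
Hypothesis hd : is_derivation x1 d.

Lemma derivation_opsum (I : Type) (s : seq I) (F : I -> op) :
  (forall p, calA (F p)) -> opeq (d (opsum s F)) (opsum s (fun p => d (F p))).
Proof.
have [_ [dD [dZ _]]] := hd; move=> FA; elim: s => [|p s IH] x x2.
  rewrite !opsum_nil dZ //; last by apply: alg_gen_gen; left.
  by apply/funext => k; rewrite /op_scale !mul0r.
have sA : calA (opsum s F) by exact: calA_opsum.
by rewrite !opsum_cons dD // /op_add IH.
Qed.

Lemma derivation_opsumZ (I : Type) (s : seq I) (c : I -> C) (F : I -> op) x :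
  (forall p, calA (F p)) -> ell2 x ->
  d (opsum s (fun p => op_scale (c p) (F p))) x = fun k => \sum_(p <- s) c p * d (F p) x k.
Proof.
have [_ [_ [dZ _]]] := hd; move=> FA x2.
rewrite derivation_opsum // => [|p]; last exact: alg_gen_scale (FA p).
by apply/funext => k; apply: eq_bigr => p _; rewrite dZ.
Qed.

(* Leibniz's rule makes [d b] additive on vectors [F p x] with [F p] in the algebra:
   expand [d (b * Q)] for [Q := \sum_p c p F p] in two ways. *)
Lemma derivation_apply_sumZ (b : op) (I : Type) (s : seq I) (c : I -> C) (F : I -> op) x :
  calA b -> (forall p, calA (F p)) -> ell2 x ->
  d b (fun k => \sum_(p <- s) c p * F p x k) = fun k => \sum_(p <- s) c p * d b (F p x) k.
Proof.
have [_ [_ [_ dM]]] := hd; move=> bA FA x2.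
pose Q := opsum s (fun p => op_scale (c p) (F p)).
have QA : calA Q by apply: calA_opsum => p; exact: alg_gen_scale (FA p).
have blin := calA_linear bA.
have bQ : op_mul b Q = opsum s (fun p => op_scale (c p) (op_mul b (F p))).
  apply/funext => y; apply/funext => k.
  by rewrite /op_mul /Q /opsum /op_scale op_linear_sumZ.
have := dM _ _ bA QA x x2; rewrite bQ derivation_opsumZ // => [|p]; last exact: alg_gen_mul bA (FA p).
rewrite /op_add /op_mul derivation_opsumZ // op_linear_sumZ // => dbQ.
apply/funext => k; have /= := congr1 (fun f => f k) dbQ.
rewrite -/(Q x) => {}dbQ; apply: (addIr (\sum_(p <- s) c p * b (d (F p) x) k)).
rewrite -dbQ -big_split /=; apply: eq_bigr => p _.
by rewrite dM // /op_add /op_mul mulrDr.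
Qed.

Section Expansion.
Variables (a : op) (I : finType) (k : I -> int) (b : I -> op).
Hypotheses (bA : forall q, calA (b q)) (bh : forall q, homogeneous (k q) (b q)).
Hypothesis ab : a = opsum (index_enum I) b.
Variables (x : nat -> C) (N : nat).
Hypothesis xN : forall i, (N <= i)%N -> x i = 0.

Definition freq (q : I * 'I_N) : int := k q.1 + q.2%:Z.

Definition component (q : I * 'I_N) : nat -> C := d (b q.1) (coord_proj q.2 x).

Lemma ell2_component q : ell2 (component q).
Proof.
have [dA _] := hd; apply: (dA _ (bA q.1)).1; apply: (@ell2_finsupp _ _ q.2.+1) => i.
by rewrite /coord_proj ltn_neqAle eq_sym => /andP[/negbTE ->].
Qed.

Lemma conj_rho_derivation t i :
  rho (- t) (d (rho t a)) x i = \sum_q cexpi ((freq q - i%:Z)%:~R * t) * component q i.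
Proof.
have rho_a : rho t a = opsum (index_enum I) (fun q => op_scale (cexpi ((k q)%:~R * t)) (b q)).
  by rewrite ab rho_opsum; congr opsum; apply/funext => q; exact: bh.
have x2 : ell2 x := ell2_finsupp xN.
pose y := fun j => cexpi (- (- t * j%:R)) * x j.
have yE : y = fun j => \sum_(p < N) cexpi (t * p%:R) * coord_proj p x j.
  rewrite -(finsupp_coord_expansion (fun j => cexpi (t * j%:R)) xN).
  by apply/funext => j; rewrite /y mulNr opprK.
have y2 : ell2 y by apply: (@ell2_finsupp _ _ N) => j /xN xj; rewrite /y xj mulr0.
rewrite rho_a /rho -/y derivation_opsumZ // mulr_sumr.
rewrite -(pair_bigA _ (fun q p => cexpi ((freq (q, p) - i%:Z)%:~R * t) * component (q, p) i)).
apply: eq_bigr => q _.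
rewrite yE (@derivation_apply_sumZ _ _ _ _ (fun p : 'I_N => coord_proj p)) // => [|p]; last exact: calA_coord_proj.
rewrite !mulr_sumr; apply: eq_bigr => p _ /=.
rewrite !mulrA -!cexpiD; congr (cexpi _ * _).
rewrite /freq /= intrB intrD -!pmulrn; ring.
Qed.

Lemma derivation_expansion i : d a x i = \sum_q component q i.
Proof.
have := conj_rho_derivation 0 i; rewrite oppr0 !rho0 => ->.
by apply: eq_bigr => q _; rewrite mulr0 cexpi0 mul1r.
Qed.

Lemma fourier_comp_expansion n i :
  fourier_comp d n a x i = \sum_q (if n + freq q == i%:Z then component q i else 0).
Proof.
rewrite /fourier_comp.
have -> : (fun t => cexpi (n%:~R * t) * rho (- t) (d (rho t a)) x i) =
    fun t => \sum_q component q i * cexpi ((n + freq q - i%:Z)%:~R * t).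
  apply/funext => t; rewrite conj_rho_derivation mulr_sumr; apply: eq_bigr => q _.
  rewrite mulrA -cexpiD mulrC; congr (_ * cexpi _).
  by rewrite !intrB !intrD; ring.
rewrite mean_sum_cexpi big_mkcond; apply: eq_bigr => q _.
by rewrite subr_eq0.
Qed.

(* The index j < L of d_{j - M} for which component q lands on coordinate i is
   j = i - freq q + M. *)
Definition window (M L : nat) (q : I * 'I_N) (i : nat) : bool :=
  (0 <= i%:Z - freq q + M%:Z) && (i%:Z - freq q + M%:Z < L%:Z).

Lemma fourier_partial_sumE M L :
  (fun i => \sum_(j < L) fourier_comp d (j%:Z - M%:Z) a x i) = masked_sum component (window M L).
Proof.
apply/funext => i; under eq_bigr do rewrite fourier_comp_expansion.
rewrite exchange_big; apply: eq_bigr => q _; rewrite -sum_ord_if_eqz; apply: eq_bigr => j _.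
by have -> : (j%:Z - M%:Z + freq q == i%:Z) = (j%:Z == i%:Z - freq q + M%:Z)
  by apply/eqP/eqP; lia.
Qed.

Lemma fourier_partial_sum_subE M L :
  (fun i => \sum_(j < L) fourier_comp d (j%:Z - M%:Z) a x i - d a x i) =
  masked_sum (fun q i => - component q i) (fun q i => ~~ window M L q i).
Proof.
apply/funext => i; rewrite derivation_expansion -masked_sumB.
by have /= -> := congr1 (fun f => f i) (fourier_partial_sumE M L).
Qed.

End Expansion.

End Derivation.

End GeneratedAlgebra.

End Operators.

Theorem proposition3p9 (R : realType) (G : topologicalZmodType)
  (hG : hausdorff_space G) (cG : compact [set: G]) (infG : ~ finite_set [set: G])
  (x1 : G) (dense_x1 : closure (range (fun n : int => x1 *~ n)) = [set: G])
  (d : op R -> op R) (hd : is_derivation x1 d) :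
  forall a : op R, calA x1 a ->
  forall x : nat -> R[i], finsupp x ->
    (forall M N : nat,
       ell2 (fun i => \sum_(j < M + N + 1) fourier_comp d (j%:Z - M%:Z) a x i)) /\
    (forall eps : R, 0 < eps -> exists K : nat, forall M N : nat,
       (K <= M)%N -> (K <= N)%N ->
       l2norm (fun i => \sum_(j < M + N + 1) fourier_comp d (j%:Z - M%:Z) a x i
                        - d a x i) < eps).
Proof.
move=> a aA x [Nx xN].
have [I [k [b [bA bh ab]]]] := calA_homogeneous_decomposition aA.
have v2 (q : I * 'I_Nx) := ell2_component hd bA (x := x) (q := q).
split=> [M N|e e_gt0].
  by rewrite (fourier_partial_sumE hd bA bh ab xN); exact: ell2_masked_sum.
have [K smallK] := l2norm_masked_sum_lt (fun q => ell2N (v2 q)) e_gt0.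
have [B freqB] : exists B, forall q : I * 'I_Nx, (`|freq k q| <= B)%N.
  by exists (\max_(q : I * 'I_Nx) `|freq k q|%N) => q; exact: leq_bigmax.
exists (K + B)%N => M N KM KN.
rewrite (fourier_partial_sum_subE hd bA bh ab xN); apply: smallK => q i.
by have := freqB q; rewrite /window; lia.
Qed.
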